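(* For every $k\ge1$ and every $l\in\{1,\dots,k+1\}$, \[i(\alpha)(\mathcal{F}_{k,l})\subset\mathcal{F}_{k-1,l-1}\qquad\text{and}\qquad X(\mathcal{F}_{k-1,l-1})\subset\mathcal{F}_{k,l}.\]
   Context: Let $n\ge1$, $M=\mathbb{R}^{2n+1}$ with coordinates $(q^1,\dots,q^n,p^1,\dots,p^n,t)$. For $\mu\in\mathbb{R}$, $\mathcal{S}^k_\mu$ denotes the space of smooth functions $S(x,\xi)$ on $M\times\mathbb{R}^{2n+1}$ homogeneous polynomial of degree $k$ in $\xi=(\xi_{q^1},\dots,\xi_{q^n},\xi_{p^1},\dots,\xi_{p^n},\xi_t)$. Fix $\delta\in\mathbb{R}$ and set $R^k=\mathcal{S}^k_{\delta+\frac{k}{n+1}}$ for $k\ge0$, $R^{j}=0$ for $j<0$. Let $E_s=\sum_i(p^i\partial_{p^i}+q^i\partial_{q^i})$, $\langle E_s,\xi\rangle=\sum_i(p^i\xi_{p^i}+q^i\xi_{q^i})$, $D(S)=\sum_i(\xi_{q^i}\partial_{p^i}S-\xi_{p^i}\partial_{q^i}S)+\xi_tE_s(S)-\langle E_s,\xi\rangle\partial_tS$. Operators: $i(\alpha):R^k\to R^{k-1}$, $i(\alpha)(S)=\frac12\big(\sum_i(p^i\partial_{\xi_{q^i}}S-q^i\partial_{\xi_{p^i}}S)-\partial_{\xi_t}S\big)$; $X:R^k\to R^{k+1}$, $X(S)=D(S)+(2(n+1)\delta+k)\xi_tS$. For $k\ge0$, $l\ge0$, $\mathcal{F}_{k,l}=R^k\cap\ker\big(i(\alpha)^l\big)$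 (so $\mathcal{F}_{k,0}=0$ and $\mathcal{F}_{k,k+1}=R^k$). *)

From HB Require Import structures.
From mathcomp Require Import all_boot all_order all_algebra.
From mathcomp Require Import all_classical all_reals all_analysis.
Set Implicit Arguments. Unset Strict Implicit. Unset Printing Implicit Defensive.
Import Order.TTheory GRing.Theory Num.Theory.
Import numFieldNormedType.Exports.
Local Open Scope ring_scope.

Section Contact.
Variable R : realType.
Variable n : nat.

(* dimension of M = R^(2n+1); coordinates ordered (q^1..q^n, p^1..p^n, t) *)
Definition dimM := (n + n + 1)%N.
Definition pt := 'rV[R]_dimM.

Definition qI (i : 'I_n) : 'I_dimM := lshift 1 (lshift n i).
Definition pI (i : 'I_n) : 'I_dimM := lshift 1 (rshift n i).
Definition tI : 'I_dimM := rshift (n + n) (@ord0 0).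

Definition ev (j : 'I_dimM) : pt := delta_mx 0 j.

Definition pdiff (j : 'I_dimM) (f : pt -> R) : pt -> R :=
  fun x => derive1 (fun s : R => f (x + s *: ev j)) 0.

Fixpoint iter_pdiff (js : seq 'I_dimM) (f : pt -> R) : pt -> R :=
  match js with
  | [::] => f
  | j :: js' => pdiff j (iter_pdiff js' f)
  end.

Definition smooth (f : pt -> R) : Prop :=
  (forall js, continuous (iter_pdiff js f)) /\
  (forall js j x, derivable (fun s : R => iter_pdiff js f (x + s *: ev j)) 0 1).

(* exponent vectors of monomials of degree k in xi *)
Definition monomial (k : nat) := {ffun 'I_dimM -> 'I_k.+1}.
Definition mdeg k (m : monomial k) : nat := (\sum_(j < dimM) (m j : nat))%N.

(* functions S(x, xi) on M x R^(2n+1) *)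
Definition symb := pt -> pt -> R.

(* R^k = S^k_mu as a space of functions: smooth, homogeneous polynomial of
   degree k in xi (equivalently: polynomial in xi with smooth coefficients) *)
Definition Rk (k : nat) (S : symb) : Prop :=
  exists c : monomial k -> pt -> R,
    (forall m, smooth (c m)) /\
    forall x xi, S x xi =
      \sum_(m : monomial k | mdeg m == k) c m x * \prod_(j < dimM) xi 0 j ^+ m j.

Definition dx (j : 'I_dimM) (S : symb) : symb :=
  fun x xi => pdiff j (fun y => S y xi) x.
Definition dxi (j : 'I_dimM) (S : symb) : symb :=
  fun x xi => pdiff j (fun eta => S x eta) xi.

Definition Es (S : symb) : symb := fun x xi =>
  \sum_(i < n) (x 0 (pI i) * dx (pI i) S x xi + x 0 (qI i) * dx (qI i) S x xi).

Definition Esxi (x xi : pt) : R :=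
  \sum_(i < n) (x 0 (pI i) * xi 0 (pI i) + x 0 (qI i) * xi 0 (qI i)).

Definition Dop (S : symb) : symb := fun x xi =>
  \sum_(i < n) (xi 0 (qI i) * dx (pI i) S x xi - xi 0 (pI i) * dx (qI i) S x xi)
  + xi 0 tI * Es S x xi - Esxi x xi * dx tI S x xi.

Definition ialpha (S : symb) : symb := fun x xi =>
  2^-1 * (\sum_(i < n) (x 0 (pI i) * dxi (qI i) S x xi
                        - x 0 (qI i) * dxi (pI i) S x xi)
          - dxi tI S x xi).

(* X on R^k (k is the degree of the argument) *)
Definition Xop (delta : R) (k : nat) (S : symb) : symb := fun x xi =>
  Dop S x xi + (2 * (n.+1)%:R * delta + k%:R) * xi 0 tI * S x xi.

Definition Fkl (k l : nat) (S : symb) : Prop :=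
  Rk k S /\ forall x xi, iter l ialpha S x xi = 0.

End Contact.

(* The operator i(alpha) lowers and X raises the xi-degree by one, and both keep
   the coefficients smooth.  On a symbol S homogeneous of degree k in xi, Euler's
   identity sum_j xi_j d_(xi_j) S = k S turns a direct computation into the
   commutation relation
     i(alpha) (X_c S) = X_(c-1) (i(alpha) S) - (c + k)/2 S,   X_c S := D S + c xi_t S.
   For c = 2(n+1) delta + k the operator X_(c-1) is X on degree k-1, so by
   induction X maps ker i(alpha)^m into ker i(alpha)^(m+1). *)

From HB Require Import structures.
From mathcomp Require Import all_boot all_order all_algebra.
From mathcomp Require Import all_classical all_reals all_analysis.
From mathcomp Require Import ring.
Set Implicit Arguments. Unset Strict Implicit. Unset Printing Implicit Defensive.
Import Order.TTheory GRing.Theory Num.Theory.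
Import numFieldNormedType.Exports.
Local Open Scope ring_scope.

Section PartialDerivative.
Variables (R : realType) (n : nat).
Local Notation P := (pt R n).
Local Notation D := (dimM n).
Implicit Types (F G : P -> R) (y : P) (j a : 'I_D).

Definition is_pderive j F y (d : R) :=
  is_derive (0 : R) (1 : R) (fun s : R => F (y + s *: ev R j)) d.

Lemma pdiff_val j F y d : is_pderive j F y d -> pdiff j F y = d.
Proof. by move=> h; rewrite /pdiff derive1E; apply: derive_val. Qed.

Lemma is_pderive_derivable j F y d : is_pderive j F y d ->
  derivable (fun s : R => F (y + s *: ev R j)) 0 1.
Proof. by case. Qed.

Lemma is_pderive_eq j F y d d' : is_pderive j F y d -> d = d' -> is_pderive j F y d'.
Proof. by move=> h <-. Qed.

Lemma is_pderive_ext j F G y d :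
  (forall s : R, F (y + s *: ev R j) = G (y + s *: ev R j)) ->
  is_pderive j F y d -> is_pderive j G y d.
Proof.
move=> e; rewrite /is_pderive.
by have <- : (fun s : R => F (y + s *: ev R j)) = (fun s => G (y + s *: ev R j))
  by apply/funext => s; apply: e.
Qed.

Lemma is_pderive_cst j y (c : R) : is_pderive j (fun _ => c) y 0.
Proof. exact: is_derive_cst. Qed.

Lemma is_pderiveD j F G y dF dG : is_pderive j F y dF -> is_pderive j G y dG ->
  is_pderive j (fun z => F z + G z) y (dF + dG).
Proof. by move=> hF hG; have := is_deriveD hF hG. Qed.

Lemma is_pderiveB j F G y dF dG : is_pderive j F y dF -> is_pderive j G y dG ->
  is_pderive j (fun z => F z - G z) y (dF - dG).
Proof. by move=> hF hG; have := is_deriveB hF hG. Qed.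

Lemma is_pderiveM j F G y dF dG : is_pderive j F y dF -> is_pderive j G y dG ->
  is_pderive j (fun z => F z * G z) y (F y * dG + G y * dF).
Proof.
move=> hF hG.
have -> : F y * dG + G y * dF = (fun s : R => F (y + s *: ev R j)) 0 *: dG
   + (fun s : R => G (y + s *: ev R j)) 0 *: dF by rewrite /= scale0r addr0.
exact: is_deriveM.
Qed.

Lemma is_pderiveZ j F y (c : R) dF : is_pderive j F y dF ->
  is_pderive j (fun z => c * F z) y (c * dF).
Proof. by move=> hF; have := is_deriveZ c hF. Qed.

Lemma is_pderiveX j F y d (m : nat) : is_pderive j F y d ->
  is_pderive j (fun z => F z ^+ m) y (m%:R * F y ^+ m.-1 * d).
Proof.
move=> h.
have -> : m%:R * F y ^+ m.-1 * d =
  (m%:R * (fun s : R => F (y + s *: ev R j)) 0 ^+ m.-1) *: d by rewrite /= scale0r addr0.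
rewrite /is_pderive -(exprfctE (fun s : R => F (y + s *: ev R j))).
exact: is_deriveX.
Qed.

Lemma is_pderive_sum (I : finType) j (F : I -> P -> R) y dF :
  (forall i, is_pderive j (F i) y (dF i)) ->
  is_pderive j (fun z => \sum_i F i z) y (\sum_i dF i).
Proof.
move=> h; rewrite /is_pderive.
rewrite (_ : (fun s : R => _) = \sum_i (fun s : R => F i (y + s *: ev R j))); last first.
  by rewrite fct_sumE.
elim/big_ind2: _ => //; first exact: is_derive_cst.
  by move=> f1 d1 f2 d2 h1 h2; apply: is_deriveD.
by move=> i _; apply: h.
Qed.

Lemma coord_shift y (s : R) j a : (y + s *: ev R j) 0 a = y 0 a + s * (j == a)%:R.
Proof. by rewrite !mxE eqxx /= eq_sym. Qed.

Lemma is_pderive_coord j y a : is_pderive j (fun z => z 0 a) y (j == a)%:R.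
Proof.
rewrite /is_pderive.
have -> : (fun s : R => (y + s *: ev R j) 0 a) = (fun s => y 0 a + s * (j == a)%:R).
  by apply/funext => s; rewrite coord_shift.
have h := is_deriveD (is_derive_cst (y 0 a) (0 : R) (1 : R))
  (is_deriveM (@is_derive_id _ _ (0 : R) (1 : R))
              (is_derive_cst ((j == a)%:R : R) (0 : R) (1 : R))).
rewrite (_ : (fun s : R => _) = cst (y 0 a) + (@id R) * cst ((j == a)%:R : R)) //.
eapply is_derive_eq; first exact: h.
by rewrite /= scaler0 !add0r -[LHS]/(_ * 1) mulr1.
Qed.

Lemma smooth_is_pderive j F y : smooth F -> is_pderive j F y (pdiff j F y).
Proof.
by case=> _ h; rewrite /is_pderive /pdiff derive1E; apply: derivableP (h [::] j y).
Qed.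

Lemma smooth_continuous F : smooth F -> continuous F.
Proof. by case=> h _; apply: (h [::]). Qed.

Lemma iter_pdiff_rcons js j F : iter_pdiff (rcons js j) F = iter_pdiff js (pdiff j F).
Proof. by elim: js => //= a js ->. Qed.

Lemma smooth_pdiff j F : smooth F -> smooth (pdiff j F).
Proof.
by case=> h1 h2; split => [js | js j' x]; rewrite -iter_pdiff_rcons; [apply: h1 | apply: h2].
Qed.

Lemma pdiff_cst j (c : R) : pdiff j (fun _ : P => c) = fun _ => 0.
Proof. by apply/funext => y; apply: pdiff_val; apply: is_pderive_cst. Qed.

Lemma pdiff_coord j a : pdiff j (fun z : P => z 0 a) = fun _ => (j == a)%:R.
Proof. by apply/funext => y; apply: pdiff_val; apply: is_pderive_coord. Qed.

Lemma smooth_cst (c : R) : smooth (fun _ : P => c).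
Proof.
have iter_cst js : exists c', iter_pdiff js (fun _ : P => c) = fun _ => c'.
  elim: js => [|j js [c' IH]] /=; first by exists c.
  by exists 0; rewrite IH; apply: pdiff_cst.
split => [js | js j x]; have [c' ->] := iter_cst js; first exact: cst_continuous.
exact: derivable_cst.
Qed.

Lemma smooth_coord a : smooth (fun z : P => z 0 a).
Proof.
have iter_coord js : iter_pdiff js (fun z : P => z 0 a) = (fun z => z 0 a) \/
    exists c, iter_pdiff js (fun z : P => z 0 a) = fun _ => c.
  elim: js => [|j js [IH | [c IH]]] /=; first by left.
    by right; exists (j == a)%:R; rewrite IH; apply: pdiff_coord.
  by right; exists 0; rewrite IH; apply: pdiff_cst.
split => [js | js j x]; case: (iter_coord js) => [-> | [c ->]].
- exact: coord_continuous.
- exact: cst_continuous.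
- exact: is_pderive_derivable (is_pderive_coord _ _ _).
- exact: derivable_cst.
Qed.

Definition sum_of_products (I : finType) (a b : I -> P -> R) : P -> R :=
  fun y => \sum_i a i y * b i y.

Lemma pdiff_sum_of_products (I : finType) (a b : I -> P -> R) j :
  (forall i, smooth (a i) /\ smooth (b i)) ->
  pdiff j (sum_of_products a b) = sum_of_products (I := (I + I)%type)
    (fun k => match k with inl i => pdiff j (a i) | inr i => a i end)
    (fun k => match k with inl i => b i | inr i => pdiff j (b i) end).
Proof.
move=> h; apply/funext => y; apply: pdiff_val; apply: is_pderive_eq.
  apply: is_pderive_sum => i; case: (h i) => ha hb.
  by apply: is_pderiveM; apply: smooth_is_pderive.
rewrite /sum_of_products big_sumType /= -big_split /=; apply: eq_bigr => i _.
by rewrite addrC mulrC [X in _ + X]mulrC.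
Qed.

(* Sums of products of smooth functions are closed under [pdiff], so every
   iterated partial derivative of one is again such a sum. *)
Lemma smooth_sum_of_products (I : finType) (a b : I -> P -> R) :
  (forall i, smooth (a i) /\ smooth (b i)) -> smooth (sum_of_products a b).
Proof.
have iter_sop js (I0 : finType) (a0 b0 : I0 -> P -> R) :
    (forall i, smooth (a0 i) /\ smooth (b0 i)) ->
    exists (I' : finType) (a' b' : I' -> P -> R),
      (forall i, smooth (a' i) /\ smooth (b' i)) /\
      iter_pdiff js (sum_of_products a0 b0) = sum_of_products a' b'.
  elim: js I0 a0 b0 => [|j js IH] I0 a0 b0 h /=; first by exists I0, a0, b0.
  have [I' [a' [b' [h' ->]]]] := IH I0 a0 b0 h.
  rewrite pdiff_sum_of_products //; do 3 eexists; split; last reflexivity.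
  by case=> i /=; case: (h' i) => h1 h2; split; try apply: smooth_pdiff.
move=> h; split => [js | js j x]; have [I' [a' [b' [h' ->]]]] := iter_sop js I a b h.
- move=> y; rewrite /sum_of_products.
  rewrite (_ : (fun y => \sum_i a' i y * b' i y) = \sum_i (a' i \* b' i)); last first.
    by rewrite fct_sumE.
  elim/big_ind: _ => //; first exact: cst_continuous.
    by move=> f g; apply: continuousD.
  by move=> i _; case: (h' i) => h1 h2; apply: continuousM; apply: smooth_continuous.
- apply: is_pderive_derivable; apply: is_pderive_sum => i; case: (h' i) => h1 h2.
  by apply: is_pderiveM; apply: smooth_is_pderive.
Qed.

Lemma smooth_mul F G : smooth F -> smooth G -> smooth (fun y => F y * G y).
Proof.
move=> hF hG.
have -> : (fun y => F y * G y) = sum_of_products (I := 'I_1) (fun _ => F) (fun _ => G).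
  by apply/funext => y; rewrite /sum_of_products big_ord1.
exact: smooth_sum_of_products.
Qed.

Lemma smooth_sum (I : finType) (F : I -> P -> R) :
  (forall i, smooth (F i)) -> smooth (fun y => \sum_i F i y).
Proof.
move=> h; have -> : (fun y => \sum_i F i y) = sum_of_products F (fun _ _ => 1).
  by apply/funext => y; apply: eq_bigr => i _; rewrite mulr1.
by apply: smooth_sum_of_products => i; split => //; exact: smooth_cst.
Qed.

Lemma smooth_scale (c : R) F : smooth F -> smooth (fun y => c * F y).
Proof. by move=> hF; apply: smooth_mul => //; apply: smooth_cst. Qed.

End PartialDerivative.

Section HomogeneousSymbols.
Variables (R : realType) (n : nat).
Local Notation P := (pt R n).
Local Notation D := (dimM n).
Implicit Types (x xi : P) (j a : 'I_D) (S : symb R n).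

Definition expo := {ffun 'I_D -> nat}.
Implicit Types (e : expo).

Definition monom e xi : R := \prod_(j < D) xi 0 j ^+ e j.
Definition expo_deg e : nat := (\sum_(j < D) e j)%N.
Definition expo_dec e j : expo := [ffun i => if i == j then (e i).-1 else e i].
Definition expo_inc e a : expo := [ffun i => (e i + (i == a))%N].
Definition expo_t (k : nat) : expo := [ffun i => if i == tI n then k else 0%N].
Definition dmonom e j xi : R := (e j)%:R * monom (expo_dec e j) xi.

Lemma monom_bigD1 e j xi :
  monom e xi = xi 0 j ^+ e j * \prod_(i < D | i != j) xi 0 i ^+ e i.
Proof. by rewrite /monom (bigD1 j). Qed.

Lemma is_pderive_monom e j xi : is_pderive j (monom e) xi (dmonom e j xi).
Proof.
apply: (@is_pderive_ext _ _ j (fun z => z 0 j ^+ e j * \prod_(i < D | i != j) xi 0 i ^+ e i)).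
  move=> s; rewrite (monom_bigD1 _ j); congr (_ * _); apply: eq_bigr => i hi.
  by rewrite coord_shift eq_sym (negbTE hi) mulr0 addr0.
apply: is_pderive_eq.
  by apply: is_pderiveM; [apply: is_pderiveX; apply: is_pderive_coord | apply: is_pderive_cst].
rewrite /dmonom (monom_bigD1 _ j) ffunE !eqxx.
have -> : \prod_(i < D | i != j) xi 0 i ^+ expo_dec e j i = \prod_(i < D | i != j) xi 0 i ^+ e i.
  by apply: eq_bigr => i hi; rewrite ffunE (negbTE hi).
rewrite mulr0 add0r /= mulr1; ring.
Qed.

Lemma monom_euler e j xi : xi 0 j * dmonom e j xi = (e j)%:R * monom e xi.
Proof.
rewrite /dmonom (monom_bigD1 (expo_dec e j) j) (monom_bigD1 e j) ffunE eqxx.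
rewrite (eq_bigr (fun i => xi 0 i ^+ e i)) => [|i hi]; last by rewrite ffunE (negbTE hi).
case: (e j) => [|m] /=; first by rewrite !mul0r mulr0.
by rewrite exprS; ring.
Qed.

Lemma monom_inc e a xi : monom (expo_inc e a) xi = xi 0 a * monom e xi.
Proof.
rewrite (monom_bigD1 _ a) (monom_bigD1 e a) ffunE eqxx addn1 exprS.
rewrite (eq_bigr (fun i => xi 0 i ^+ e i)) => [|i hi]; last by rewrite ffunE (negbTE hi) addn0.
by rewrite mulrA.
Qed.

Lemma expo_deg_inc e a : expo_deg (expo_inc e a) = (expo_deg e).+1.
Proof.
rewrite /expo_deg (bigD1 a) //= [in RHS](bigD1 a) //= ffunE eqxx.
rewrite (eq_bigr (fun i => e i)) => [|i hi]; last by rewrite ffunE (negbTE hi) addn0.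
by rewrite addn1 addSn.
Qed.

Lemma expo_deg_dec e j : (0 < e j)%N -> expo_deg (expo_dec e j) = (expo_deg e).-1.
Proof.
move=> h; rewrite /expo_deg (bigD1 j) //= [in RHS](bigD1 j) //= ffunE eqxx.
rewrite (eq_bigr (fun i => e i)) => [|i hi]; last by rewrite ffunE (negbTE hi).
by case: (e j) h.
Qed.

Lemma expo_deg_t k : expo_deg (expo_t k) = k.
Proof.
rewrite /expo_deg (bigD1 (tI n)) //= ffunE eqxx big1 ?addn0 // => i hi.
by rewrite ffunE (negbTE hi).
Qed.

Lemma expo_le_deg e j : (e j <= expo_deg e)%N.
Proof. by rewrite /expo_deg (bigD1 j) //= leq_addr. Qed.

Definition symb_sum (I : finType) (c : I -> P -> R) (e : I -> expo) : symb R n :=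
  fun x xi => \sum_i c i x * monom (e i) xi.

Definition homsymb k S := exists (I : finType) (c : I -> P -> R) (e : I -> expo),
  (forall i, smooth (c i) /\ expo_deg (e i) = k) /\ S = symb_sum c e.

Lemma homsymb_ext k S T : (forall x xi, S x xi = T x xi) -> homsymb k S -> homsymb k T.
Proof. by move=> h; have <- : S = T by apply/funext => x; apply/funext => xi; apply: h. Qed.

Lemma homsymb0 k : homsymb k (fun _ _ => 0).
Proof.
exists void, (fun _ _ => 0), (fun _ => expo_t k); split; first by case.
by apply/funext => x; apply/funext => xi; rewrite /symb_sum big1 // => -[].
Qed.

Lemma homsymbD k S T : homsymb k S -> homsymb k T -> homsymb k (fun x xi => S x xi + T x xi).
Proof.
move=> [I [c [e [h ->]]]] [J [c' [e' [h' ->]]]].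
exists (I + J)%type, (fun q => match q with inl i => c i | inr j => c' j end),
  (fun q => match q with inl i => e i | inr j => e' j end); split; first by case.
by apply/funext => x; apply/funext => xi; rewrite /symb_sum big_sumType.
Qed.

Lemma homsymb_smoothM k S (f : P -> R) : smooth f -> homsymb k S ->
  homsymb k (fun x xi => f x * S x xi).
Proof.
move=> hf [I [c [e [h ->]]]]; exists I, (fun i x => f x * c i x), e; split.
  by move=> i; case: (h i) => h1 h2; split => //; apply: smooth_mul.
apply/funext => x; apply/funext => xi; rewrite /symb_sum mulr_sumr; apply: eq_bigr => i _.
by rewrite mulrA.
Qed.

Lemma homsymbZ k S (c : R) : homsymb k S -> homsymb k (fun x xi => c * S x xi).
Proof. by apply: (homsymb_smoothM (f := fun _ => c)); apply: smooth_cst. Qed.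

Lemma homsymbB k S T : homsymb k S -> homsymb k T -> homsymb k (fun x xi => S x xi - T x xi).
Proof.
move=> hS hT; apply: (@homsymb_ext k (fun x xi => S x xi + (-1) * T x xi)).
  by move=> x xi; rewrite mulN1r.
by apply: homsymbD => //; apply: homsymbZ.
Qed.

Lemma homsymb_coordM k S b : homsymb k S -> homsymb k (fun x xi => x 0 b * S x xi).
Proof. by apply: homsymb_smoothM; apply: smooth_coord. Qed.

Lemma homsymb_xiM k S a : homsymb k S -> homsymb k.+1 (fun x xi => xi 0 a * S x xi).
Proof.
move=> [I [c [e [h ->]]]]; exists I, c, (fun i => expo_inc (e i) a); split.
  by move=> i; case: (h i) => h1 h2; rewrite expo_deg_inc h2.
apply/funext => x; apply/funext => xi; rewrite /symb_sum mulr_sumr; apply: eq_bigr => i _.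
by rewrite monom_inc mulrCA.
Qed.

Lemma homsymb_sum k m (F : 'I_m -> symb R n) :
  (forall i, homsymb k (F i)) -> homsymb k (fun x xi => \sum_(i < m) F i x xi).
Proof.
elim: m F => [|m IH] F h.
  by apply: (homsymb_ext _ (homsymb0 k)) => x xi; rewrite big_ord0.
apply: (@homsymb_ext k (fun x xi =>
  \sum_(i < m) F (widen_ord (leqnSn m) i) x xi + F ord_max x xi)).
  by move=> x xi; rewrite big_ord_recr.
by apply: homsymbD; [apply: IH => i; apply: h | apply: h].
Qed.

Lemma is_pderive_symb_sum_x (I : finType) (c : I -> P -> R) (e : I -> expo) a x xi :
  (forall i, smooth (c i)) ->
  is_pderive a (fun y => symb_sum c e y xi) x (symb_sum (fun i => pdiff a (c i)) e x xi).
Proof.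
move=> h; apply: is_pderive_eq.
  apply: is_pderive_sum => i.
  by apply: is_pderiveM; [apply: smooth_is_pderive; apply: h | apply: is_pderive_cst].
by apply: eq_bigr => i _; rewrite mulr0 add0r mulrC.
Qed.

Lemma dx_symb_sum (I : finType) (c : I -> P -> R) (e : I -> expo) a :
  (forall i, smooth (c i)) -> dx a (symb_sum c e) = symb_sum (fun i => pdiff a (c i)) e.
Proof.
move=> h; apply/funext => x; apply/funext => xi.
by apply: pdiff_val; apply: is_pderive_symb_sum_x.
Qed.

Lemma is_pderive_symb_sum_xi (I : finType) (c : I -> P -> R) (e : I -> expo) j x xi :
  is_pderive j (symb_sum c e x) xi (\sum_i c i x * dmonom (e i) j xi).
Proof.
apply: is_pderive_eq.
  by apply: is_pderive_sum => i; apply: is_pderiveM; [apply: is_pderive_cst | apply: is_pderive_monom].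
by apply: eq_bigr => i _; rewrite mulr0 addr0.
Qed.

Lemma dxi_symb_sum (I : finType) (c : I -> P -> R) (e : I -> expo) j :
  dxi j (symb_sum c e) = fun x xi => \sum_i c i x * dmonom (e i) j xi.
Proof.
apply/funext => x; apply/funext => xi.
by apply: pdiff_val; apply: is_pderive_symb_sum_xi.
Qed.

Lemma homsymb_dx k S a : homsymb k S -> homsymb k (dx a S).
Proof.
move=> [I [c [e [h ->]]]]; exists I, (fun i => pdiff a (c i)), e; split.
  by move=> i; case: (h i) => h1 h2; split => //; apply: smooth_pdiff.
by apply: dx_symb_sum => i; case: (h i).
Qed.

(* A monomial not containing [xi_j] has zero derivative; it is replaced by a
   dummy exponent of the right degree. *)
Lemma homsymb_dxi k S j : homsymb k S -> homsymb k.-1 (dxi j S).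
Proof.
move=> [I [c [e [h ->]]]].
exists I, (fun i x => (e i j)%:R * c i x),
  (fun i => if (0 < e i j)%N then expo_dec (e i) j else expo_t k.-1); split.
  move=> i; case: (h i) => h1 h2; split; first exact: smooth_scale.
  by case: ifP => hp; [rewrite expo_deg_dec // h2 | exact: expo_deg_t].
rewrite dxi_symb_sum; apply/funext => x; apply/funext => xi; rewrite /symb_sum.
apply: eq_bigr => i _; rewrite /dmonom; case: ifP => hp; first by rewrite mulrCA mulrA.
by move/negbT: hp; rewrite -leqNgt leqn0 => /eqP ->; rewrite !mul0r mulr0.
Qed.

Lemma homsymb_is_pderive_xi k S j x xi : homsymb k S -> is_pderive j (S x) xi (dxi j S x xi).
Proof. by move=> [I [c [e [h ->]]]]; rewrite dxi_symb_sum; exact: is_pderive_symb_sum_xi. Qed.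

Lemma homsymb_is_pderive_x k S a x xi : homsymb k S ->
  is_pderive a (fun y => S y xi) x (dx a S x xi).
Proof.
move=> [I [c [e [h ->]]]]; rewrite dx_symb_sum; last by move=> i; case: (h i).
by apply: is_pderive_symb_sum_x => i; case: (h i).
Qed.

Definition expo_of_monomial k (m : monomial n k) : expo := [ffun j => nat_of_ord (m j)].

Lemma Rk_homsymb k S : Rk k S -> homsymb k S.
Proof.
case=> c [hc hS].
exists (monomial n k), (fun m => if mdeg m == k then c m else (fun _ => 0)),
  (fun m => if mdeg m == k then expo_of_monomial m else expo_t k); split.
  move=> m; case: ifP => hm; split; rewrite ?expo_deg_t //; last exact: smooth_cst.
  transitivity (mdeg m); last exact/eqP.
  by apply: eq_bigr => j _; rewrite ffunE.
apply/funext => x; apply/funext => xi; rewrite hS /symb_sum big_mkcond /=.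
apply: eq_bigr => m _; case: ifP => hm; last by rewrite mul0r.
by congr (_ * _); apply: eq_bigr => j _; rewrite ffunE.
Qed.

Lemma homsymb_Rk k S : homsymb k S -> Rk k S.
Proof.
case=> I [c [e [h ->]]].
exists (fun m x => \sum_i (if e i == expo_of_monomial m then c i else (fun _ => 0)) x); split.
  move=> m; apply: smooth_sum => i; case: ifP => _; last exact: smooth_cst.
  by case: (h i).
move=> x xi; rewrite /symb_sum.
rewrite (eq_bigr (fun m => \sum_i (if e i == expo_of_monomial m then c i x else 0)
                           * monom (expo_of_monomial m) xi)); last first.
  move=> m _; rewrite mulr_suml; apply: eq_bigr => i _; congr (_ * _).
    by case: ifP.
  by apply: eq_bigr => j _; rewrite ffunE.
rewrite exchange_big /=; apply: eq_bigr => i _.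
pose m0 : monomial n k := [ffun j => inord (e i j)].
have m0E j : nat_of_ord (m0 j) = e i j.
  by rewrite ffunE inordK // ltnS; case: (h i) => _ <-; exact: expo_le_deg.
have em0 : expo_of_monomial m0 = e i by apply/ffunP => j; rewrite ffunE m0E.
have dm0 : mdeg m0 == k.
  case: (h i) => _ hk; apply/eqP; rewrite -[RHS]hk; apply: eq_bigr => j _; exact: m0E.
rewrite (bigD1 m0) //= em0 eqxx big1 ?addr0 // => m /andP [_ hm].
case: eqP => [he|]; last by rewrite mul0r.
exfalso; move/negP: hm; apply; apply/eqP/ffunP => j.
by apply: val_inj; rewrite /= m0E he ffunE.
Qed.

Lemma homsymb_euler k S x xi : homsymb k S ->
  \sum_(j < D) xi 0 j * dxi j S x xi = k%:R * S x xi.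
Proof.
move=> [I [c [e [h ->]]]].
rewrite (eq_bigr (fun j => \sum_i c i x * (xi 0 j * dmonom (e i) j xi))) => [|j _]; last first.
  by rewrite dxi_symb_sum mulr_sumr; apply: eq_bigr => i _; rewrite mulrCA.
rewrite exchange_big /symb_sum mulr_sumr; apply: eq_bigr => i _.
rewrite (eq_bigr (fun j => c i x * ((e i j)%:R * monom (e i) xi))) => [|j _]; last first.
  by rewrite monom_euler.
rewrite -mulr_sumr -mulr_suml -natr_sum.
by case: (h i) => _ <-; rewrite /expo_deg; ring.
Qed.

Lemma dxi_dx k S j a x xi : homsymb k S -> dxi j (dx a S) x xi = dx a (dxi j S) x xi.
Proof.
move=> [I [c [e [h ->]]]].
have hc i : smooth (c i) by case: (h i).
rewrite dx_symb_sum // !dxi_symb_sum; symmetry; apply: pdiff_val; apply: is_pderive_eq.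
  apply: is_pderive_sum => i.
  by apply: is_pderiveM; [apply: smooth_is_pderive; apply: hc | apply: is_pderive_cst].
by apply: eq_bigr => i _; rewrite mulr0 add0r mulrC.
Qed.

End HomogeneousSymbols.

(* [ring] compares atoms up to conversion and would unfold these operators;
   abstracting their applications first keeps it fast. *)
Ltac ring_atoms :=
  repeat match goal with
  | |- context [dx ?a ?S ?x ?xi] => generalize (dx a S x xi); intro
  | |- context [dxi ?a ?S ?x ?xi] => generalize (dxi a S x xi); intro
  | |- context [Dop ?S ?x ?xi] => generalize (Dop S x xi); intro
  | |- context [Es ?S ?x ?xi] => generalize (Es S x xi); intro
  | |- context [Esxi ?x ?xi] => generalize (Esxi x xi); intro
  | |- context [bigop ?a ?b ?c] => generalize (bigop a b c); intro
  end; ring.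

Section Operators.
Variables (R : realType) (n : nat).
Local Notation P := (pt R n).
Local Notation D := (dimM n).
Local Notation tI := (tI n).
Implicit Types (x xi : P) (S : symb R n) (i : 'I_n) (j a : 'I_D).

Lemma eq_qI i i' : (qI i == qI i') = (i == i').
Proof. by apply/eqP/eqP => [/(congr1 val) /= /val_inj | ->]. Qed.

Lemma eq_pI i i' : (pI i == pI i') = (i == i').
Proof.
apply/eqP/eqP => [h | -> //]; apply: val_inj; move/(congr1 val): h => /= /eqP.
by rewrite eqn_add2l => /eqP.
Qed.

Lemma eq_qIpI i i' : (qI i == pI i') = false.
Proof.
apply/eqP => /(congr1 val) /= h; have := ltn_ord i; rewrite h.
by rewrite ltnNge leq_addr.
Qed.

Lemma eq_pIqI i i' : (pI i == qI i') = false.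
Proof. by rewrite eq_sym eq_qIpI. Qed.

Lemma eq_qItI i : (qI i == tI) = false.
Proof.
apply/eqP => /(congr1 val) /= h; have := ltn_ord i; rewrite h addn0.
by rewrite ltnNge leq_addr.
Qed.

Lemma eq_pItI i : (pI i == tI) = false.
Proof.
apply/eqP => /(congr1 val) /= /eqP; rewrite addn0 eqn_add2l => /eqP h.
by have := ltn_ord i; rewrite h ltnn.
Qed.

Lemma eq_tIqI i : (tI == qI i) = false.
Proof. by rewrite eq_sym eq_qItI. Qed.

Lemma eq_tIpI i : (tI == pI i) = false.
Proof. by rewrite eq_sym eq_pItI. Qed.

Lemma sum_dimM (F : 'I_D -> R) :
  \sum_(j < D) F j = \sum_(i < n) F (qI i) + \sum_(i < n) F (pI i) + F tI.
Proof. by rewrite big_split_ord /= big_split_ord /= big_ord1. Qed.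

Lemma sum_kronecker i0 (F : 'I_n -> R) : \sum_(i < n) (i0 == i)%:R * F i = F i0.
Proof.
rewrite (bigD1 i0) //= eqxx mul1r big1 ?addr0 // => i hi.
by rewrite eq_sym (negbTE hi) mul0r.
Qed.

Lemma sum_kroneckerr i0 (F : 'I_n -> R) : \sum_(i < n) F i * (i0 == i)%:R = F i0.
Proof. by rewrite -[RHS](sum_kronecker i0); apply: eq_bigr => i _; rewrite mulrC. Qed.

(* [Xop delta k] is [Xw (2 (n+1) delta + k)] by conversion. *)
Definition Xw (c : R) S : symb R n := fun x xi => Dop S x xi + c * xi 0 tI * S x xi.

Lemma homsymb_Es k S : homsymb k S -> homsymb k (Es S).
Proof.
move=> hS; apply: (homsymb_ext (S := fun x xi => \sum_(i < n) (fun i x xi =>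
   x 0 (pI i) * dx (pI i) S x xi + x 0 (qI i) * dx (qI i) S x xi) i x xi)) => //.
by apply: homsymb_sum => i; apply: homsymbD; apply: homsymb_coordM; apply: homsymb_dx.
Qed.

Lemma homsymb_Dop k S : homsymb k S -> homsymb k.+1 (Dop S).
Proof.
move=> hS.
apply: (homsymb_ext (S := fun x xi => (\sum_(i < n) (fun i x xi =>
     xi 0 (qI i) * dx (pI i) S x xi - xi 0 (pI i) * dx (qI i) S x xi) i x xi
   + xi 0 tI * Es S x xi)
   - \sum_(i < n) (fun i x xi => x 0 (pI i) * (xi 0 (pI i) * dx tI S x xi)
   + x 0 (qI i) * (xi 0 (qI i) * dx tI S x xi)) i x xi)).
  move=> x xi; rewrite /Dop /Esxi mulr_suml; congr (_ - _); apply: eq_bigr => i _.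
  ring_atoms.
apply: homsymbB; first apply: homsymbD.
- by apply: homsymb_sum => i; apply: homsymbB; apply: homsymb_xiM; apply: homsymb_dx.
- by apply: homsymb_xiM; apply: homsymb_Es.
- apply: homsymb_sum => i.
  by apply: homsymbD; apply: homsymb_coordM; apply: homsymb_xiM; apply: homsymb_dx.
Qed.

Lemma homsymb_Xw k S c : homsymb k S -> homsymb k.+1 (Xw c S).
Proof.
move=> hS; apply: (homsymb_ext (S := fun x xi => Dop S x xi + c * (xi 0 tI * S x xi))).
  by move=> x xi; rewrite /Xw mulrA.
by apply: homsymbD; [apply: homsymb_Dop | apply: homsymbZ; apply: homsymb_xiM].
Qed.

Lemma homsymb_ialpha k S : homsymb k S -> homsymb k.-1 (ialpha S).
Proof.
move=> hS; apply: (homsymb_ext (S := fun x xi => 2^-1 * (\sum_(i < n) (fun i x xi =>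
  x 0 (pI i) * dxi (qI i) S x xi - x 0 (qI i) * dxi (pI i) S x xi) i x xi
  - dxi tI S x xi))) => //.
apply: homsymbZ; apply: homsymbB; last exact: homsymb_dxi.
by apply: homsymb_sum => i; apply: homsymbB; apply: homsymb_coordM; apply: homsymb_dxi.
Qed.

Lemma is_pderive_Es_xi k S j x xi : homsymb k S ->
  is_pderive j (Es S x) xi (Es (dxi j S) x xi).
Proof.
move=> hS; apply: is_pderive_eq.
  apply: is_pderive_sum => i; apply: is_pderiveD; apply: is_pderiveM;
  (apply: is_pderive_cst || (apply: homsymb_is_pderive_xi; apply: homsymb_dx; exact: hS)).
apply: eq_bigr => i _; rewrite (dxi_dx _ (pI i) _ _ hS) (dxi_dx _ (qI i) _ _ hS).
ring_atoms.
Qed.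

Lemma is_pderive_Esxi j x xi : is_pderive j (Esxi x) xi
  (\sum_(i < n) (x 0 (pI i) * (j == pI i)%:R + x 0 (qI i) * (j == qI i)%:R)).
Proof.
apply: is_pderive_eq.
  apply: is_pderive_sum => i; apply: is_pderiveD; apply: is_pderiveM;
  (apply: is_pderive_cst || apply: is_pderive_coord).
by apply: eq_bigr => i _; ring_atoms.
Qed.

Lemma dxi_Dop k S j x xi : homsymb k S ->
  dxi j (Dop S) x xi = Dop (dxi j S) x xi
   + \sum_(i < n) ((j == qI i)%:R * dx (pI i) S x xi - (j == pI i)%:R * dx (qI i) S x xi)
   + (j == tI)%:R * Es S x xi
   - (\sum_(i < n) (x 0 (pI i) * (j == pI i)%:R + x 0 (qI i) * (j == qI i)%:R)) * dx tI S x xi.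
Proof.
move=> hS; have hdx a := homsymb_is_pderive_xi j x xi (homsymb_dx a hS).
apply: pdiff_val; apply: is_pderive_eq.
  apply: is_pderiveB; first apply: is_pderiveD.
  - apply: is_pderive_sum => i; apply: is_pderiveB; apply: is_pderiveM;
    (apply: is_pderive_coord || apply: hdx).
  - by apply: is_pderiveM; [apply: is_pderive_coord | apply: is_pderive_Es_xi hS].
  - by apply: is_pderiveM; [apply: is_pderive_Esxi | apply: hdx].
have -> : \sum_(i < n) (xi 0 (qI i) * dxi j (dx (pI i) S) x xi + dx (pI i) S x xi * (j == qI i)%:R
      - (xi 0 (pI i) * dxi j (dx (qI i) S) x xi + dx (qI i) S x xi * (j == pI i)%:R))
   = \sum_(i < n) (xi 0 (qI i) * dx (pI i) (dxi j S) x xi - xi 0 (pI i) * dx (qI i) (dxi j S) x xi)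
   + \sum_(i < n) ((j == qI i)%:R * dx (pI i) S x xi - (j == pI i)%:R * dx (qI i) S x xi).
  rewrite -big_split; apply: eq_bigr => i _ /=.
  by rewrite (dxi_dx _ (pI i) _ _ hS) (dxi_dx _ (qI i) _ _ hS); ring_atoms.
by rewrite /Dop (dxi_dx _ tI _ _ hS); ring_atoms.
Qed.

Lemma dxi_Xw k S c j x xi : homsymb k S ->
  dxi j (Xw c S) x xi = Xw c (dxi j S) x xi
   + \sum_(i < n) ((j == qI i)%:R * dx (pI i) S x xi - (j == pI i)%:R * dx (qI i) S x xi)
   + (j == tI)%:R * (Es S x xi + c * S x xi)
   - (\sum_(i < n) (x 0 (pI i) * (j == pI i)%:R + x 0 (qI i) * (j == qI i)%:R)) * dx tI S x xi.
Proof.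
move=> hS; apply: pdiff_val; apply: is_pderive_eq.
  apply: is_pderiveD; first by apply: homsymb_is_pderive_xi; apply: homsymb_Dop; exact: hS.
  apply: is_pderiveM; first by apply: is_pderiveZ; apply: is_pderive_coord.
  exact: homsymb_is_pderive_xi hS.
by rewrite (dxi_Dop _ _ _ hS) /Xw; ring_atoms.
Qed.

Lemma dxi_qI_Xw k S c i0 x xi : homsymb k S ->
  dxi (qI i0) (Xw c S) x xi =
    Xw c (dxi (qI i0) S) x xi + dx (pI i0) S x xi - x 0 (qI i0) * dx tI S x xi.
Proof.
move=> hS; rewrite (dxi_Xw _ _ _ _ hS).
rewrite (eq_bigr (fun i => (i0 == i)%:R * dx (pI i) S x xi)) => [|i _]; last first.
  by rewrite eq_qI eq_qIpI mul0r subr0.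
rewrite sum_kronecker.
rewrite (eq_bigr (fun i => x 0 (qI i) * (i0 == i)%:R)) => [|i _]; last first.
  by rewrite eq_qIpI eq_qI mulr0 add0r.
by rewrite sum_kroneckerr eq_qItI mul0r addr0.
Qed.

Lemma dxi_pI_Xw k S c i0 x xi : homsymb k S ->
  dxi (pI i0) (Xw c S) x xi =
    Xw c (dxi (pI i0) S) x xi - dx (qI i0) S x xi - x 0 (pI i0) * dx tI S x xi.
Proof.
move=> hS; rewrite (dxi_Xw _ _ _ _ hS).
rewrite (eq_bigr (fun i => - ((i0 == i)%:R * dx (qI i) S x xi))) => [|i _]; last first.
  by rewrite eq_pIqI eq_pI mul0r add0r.
rewrite sumrN sum_kronecker.
rewrite (eq_bigr (fun i => x 0 (pI i) * (i0 == i)%:R)) => [|i _]; last first.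
  by rewrite eq_pI eq_pIqI mulr0 addr0.
by rewrite sum_kroneckerr eq_pItI mul0r addr0.
Qed.

Lemma dxi_tI_Xw k S c x xi : homsymb k S ->
  dxi tI (Xw c S) x xi = Xw c (dxi tI S) x xi + (Es S x xi + c * S x xi).
Proof.
move=> hS; rewrite (dxi_Xw _ _ _ _ hS).
rewrite big1 => [|i _]; last by rewrite eq_tIqI eq_tIpI !mul0r subr0.
rewrite big1 => [|i _]; last by rewrite eq_tIqI eq_tIpI !mulr0 addr0.
by rewrite eqxx mul1r addr0 mul0r subr0.
Qed.

(* [i(alpha)] and [D] are first-order operators in [xi] and [x] respectively;
   [ialpha_grad] and [Dop_grad] are their actions on a given gradient. *)
Definition ialpha_grad (g : 'I_D -> R) x : R :=
  2^-1 * (\sum_(i < n) (x 0 (pI i) * g (qI i) - x 0 (qI i) * g (pI i)) - g tI).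

Definition Dop_grad (g : 'I_D -> R) x xi : R :=
  \sum_(i < n) (xi 0 (qI i) * g (pI i) - xi 0 (pI i) * g (qI i))
  + xi 0 tI * \sum_(i < n) (x 0 (pI i) * g (pI i) + x 0 (qI i) * g (qI i))
  - Esxi x xi * g tI.

Lemma ialphaE S x xi : ialpha S x xi = ialpha_grad (fun j => dxi j S x xi) x.
Proof. by []. Qed.

Lemma DopE S x xi : Dop S x xi = Dop_grad (fun a => dx a S x xi) x xi.
Proof. by []. Qed.

Lemma ialpha_XwE k S c x xi : homsymb k S ->
  ialpha (Xw c S) x xi = ialpha_grad (fun j => Dop (dxi j S) x xi) x
    + c * xi 0 tI * ialpha S x xi - 2^-1 * c * S x xi.
Proof.
move=> hS; rewrite /ialpha (dxi_tI_Xw _ _ _ hS).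
under eq_bigr => i _ do rewrite (dxi_qI_Xw _ _ _ _ hS) (dxi_pI_Xw _ _ _ _ hS).
have -> : \sum_(i < n) (x 0 (pI i) * (Xw c (dxi (qI i) S) x xi + dx (pI i) S x xi
      - x 0 (qI i) * dx tI S x xi)
    - x 0 (qI i) * (Xw c (dxi (pI i) S) x xi - dx (qI i) S x xi
      - x 0 (pI i) * dx tI S x xi))
  = \sum_(i < n) (x 0 (pI i) * Dop (dxi (qI i) S) x xi - x 0 (qI i) * Dop (dxi (pI i) S) x xi)
    + c * xi 0 tI * \sum_(i < n) (x 0 (pI i) * dxi (qI i) S x xi - x 0 (qI i) * dxi (pI i) S x xi)
    + Es S x xi.
  by rewrite /Xw /Es !mulr_sumr -!big_split; apply: eq_bigr => i _ /=; ring_atoms.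
by rewrite /ialpha_grad /Xw; ring_atoms.
Qed.

Lemma ialpha_gradBZ (g1 g2 : 'I_D -> R) (lam : R) x :
  ialpha_grad (fun j => g1 j - lam * g2 j) x = ialpha_grad g1 x - lam * ialpha_grad g2 x.
Proof.
rewrite /ialpha_grad.
have -> : \sum_(i < n) (x 0 (pI i) * (g1 (qI i) - lam * g2 (qI i))
                       - x 0 (qI i) * (g1 (pI i) - lam * g2 (pI i)))
  = \sum_(i < n) (x 0 (pI i) * g1 (qI i) - x 0 (qI i) * g1 (pI i))
    - lam * \sum_(i < n) (x 0 (pI i) * g2 (qI i) - x 0 (qI i) * g2 (pI i)).
  by rewrite mulr_sumr -sumrB; apply: eq_bigr => i _; ring.
ring_atoms.
Qed.

Lemma Dop_grad_lin (u v : R) (g1 g2 : 'I_D -> R) x xi :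
  Dop_grad (fun a => u * g1 a + v * g2 a) x xi = u * Dop_grad g1 x xi + v * Dop_grad g2 x xi.
Proof.
rewrite /Dop_grad.
have -> : \sum_(i < n) (xi 0 (qI i) * (u * g1 (pI i) + v * g2 (pI i))
                       - xi 0 (pI i) * (u * g1 (qI i) + v * g2 (qI i)))
  = u * \sum_(i < n) (xi 0 (qI i) * g1 (pI i) - xi 0 (pI i) * g1 (qI i))
  + v * \sum_(i < n) (xi 0 (qI i) * g2 (pI i) - xi 0 (pI i) * g2 (qI i)).
  by rewrite !mulr_sumr -big_split; apply: eq_bigr => i _ /=; ring.
have -> : \sum_(i < n) (x 0 (pI i) * (u * g1 (pI i) + v * g2 (pI i))
                       + x 0 (qI i) * (u * g1 (qI i) + v * g2 (qI i)))
  = u * \sum_(i < n) (x 0 (pI i) * g1 (pI i) + x 0 (qI i) * g1 (qI i))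
  + v * \sum_(i < n) (x 0 (pI i) * g2 (pI i) + x 0 (qI i) * g2 (qI i)).
  by rewrite !mulr_sumr -big_split; apply: eq_bigr => i _ /=; ring.
ring_atoms.
Qed.

Lemma Dop_gradB (g1 g2 : 'I_D -> R) x xi :
  Dop_grad (fun a => g1 a - g2 a) x xi = Dop_grad g1 x xi - Dop_grad g2 x xi.
Proof.
have := Dop_grad_lin 1 (-1) g1 g2 x xi; rewrite mul1r mulN1r => <-.
by congr Dop_grad; apply/funext => a; rewrite mul1r mulN1r.
Qed.

Lemma Dop_gradZ (u : R) (g : 'I_D -> R) x xi :
  Dop_grad (fun a => u * g a) x xi = u * Dop_grad g x xi.
Proof.
have := Dop_grad_lin u 0 g g x xi; rewrite mul0r addr0 => <-.
by congr Dop_grad; apply/funext => a; rewrite mul0r addr0.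
Qed.

Lemma Dop_grad_sum (g : 'I_n -> 'I_D -> R) x xi :
  Dop_grad (fun a => \sum_(i < n) g i a) x xi = \sum_(i < n) Dop_grad (g i) x xi.
Proof.
rewrite /Dop_grad.
have -> : \sum_(i' < n) (xi 0 (qI i') * (\sum_(i < n) g i (pI i'))
                        - xi 0 (pI i') * (\sum_(i < n) g i (qI i')))
  = \sum_(i < n) \sum_(i' < n) (xi 0 (qI i') * g i (pI i') - xi 0 (pI i') * g i (qI i')).
  by rewrite exchange_big; apply: eq_bigr => i' _; rewrite !mulr_sumr -sumrB.
have -> : xi 0 tI * \sum_(i' < n) (x 0 (pI i') * (\sum_(i < n) g i (pI i'))
                                  + x 0 (qI i') * (\sum_(i < n) g i (qI i')))
  = \sum_(i < n) xi 0 tI * \sum_(i' < n) (x 0 (pI i') * g i (pI i') + x 0 (qI i') * g i (qI i')).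
  rewrite -mulr_sumr exchange_big; congr (_ * _); apply: eq_bigr => i' _.
  by rewrite !mulr_sumr -big_split.
by rewrite mulr_sumr -big_split -sumrB.
Qed.

Lemma Dop_grad_pI i0 x xi :
  Dop_grad (fun a => (a == pI i0)%:R) x xi = xi 0 (qI i0) + xi 0 tI * x 0 (pI i0).
Proof.
rewrite /Dop_grad.
rewrite (eq_bigr (fun i => xi 0 (qI i) * (i0 == i)%:R)) => [|i _]; last first.
  by rewrite eq_qIpI eq_pI eq_sym mulr0 subr0.
rewrite sum_kroneckerr.
rewrite (eq_bigr (fun i => x 0 (pI i) * (i0 == i)%:R)) => [|i _]; last first.
  by rewrite eq_qIpI eq_pI eq_sym mulr0 addr0.
by rewrite sum_kroneckerr eq_tIpI mulr0 subr0.
Qed.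

Lemma Dop_grad_qI i0 x xi :
  Dop_grad (fun a => (a == qI i0)%:R) x xi = - xi 0 (pI i0) + xi 0 tI * x 0 (qI i0).
Proof.
rewrite /Dop_grad.
rewrite (eq_bigr (fun i => - (xi 0 (pI i) * (i0 == i)%:R))) => [|i _]; last first.
  by rewrite eq_qI eq_pIqI eq_sym mulr0 add0r.
rewrite sumrN sum_kroneckerr.
rewrite (eq_bigr (fun i => x 0 (qI i) * (i0 == i)%:R)) => [|i _]; last first.
  by rewrite eq_qI eq_pIqI eq_sym mulr0 add0r.
by rewrite sum_kroneckerr eq_tIqI mulr0 subr0.
Qed.

Lemma dx_ialpha k S x xi : homsymb k S ->
  (fun a => dx a (ialpha S) x xi) = fun a => 2^-1 * (\sum_(i < n) (
     (x 0 (pI i) * dx a (dxi (qI i) S) x xi + dxi (qI i) S x xi * (a == pI i)%:R)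
   - (x 0 (qI i) * dx a (dxi (pI i) S) x xi + dxi (pI i) S x xi * (a == qI i)%:R))
   - dx a (dxi tI S) x xi).
Proof.
move=> hS; apply/funext => a; apply: pdiff_val.
have hdxi j := homsymb_is_pderive_x a x xi (homsymb_dxi j hS).
apply: is_pderiveZ; apply: is_pderiveB; last exact: hdxi.
by apply: is_pderive_sum => i; apply: is_pderiveB; apply: is_pderiveM;
  (apply: is_pderive_coord || apply: hdxi).
Qed.

Lemma homsymb_euler_split k S x xi : homsymb k S ->
  k%:R * S x xi =
    \sum_(i < n) (xi 0 (qI i) * dxi (qI i) S x xi + xi 0 (pI i) * dxi (pI i) S x xi)
    + xi 0 tI * dxi tI S x xi.
Proof. by move=> hS; rewrite -(homsymb_euler x xi hS) sum_dimM big_split. Qed.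

Lemma Dop_ialpha k S x xi : homsymb k S ->
  Dop (ialpha S) x xi = ialpha_grad (fun j => Dop (dxi j S) x xi) x
    + 2^-1 * (k%:R * S x xi) + xi 0 tI * ialpha S x xi.
Proof.
move=> hS.
have -> : Dop (ialpha S) x xi = 2^-1 * (\sum_(i < n) (
     (x 0 (pI i) * Dop (dxi (qI i) S) x xi
      + dxi (qI i) S x xi * (xi 0 (qI i) + xi 0 tI * x 0 (pI i)))
   - (x 0 (qI i) * Dop (dxi (pI i) S) x xi
      + dxi (pI i) S x xi * (- xi 0 (pI i) + xi 0 tI * x 0 (qI i))))
   - Dop (dxi tI S) x xi).
  rewrite DopE (dx_ialpha _ _ hS) Dop_gradZ Dop_gradB Dop_grad_sum.
  congr (_ * (_ - _)); apply: eq_bigr => i _.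
  by rewrite Dop_gradB !Dop_grad_lin Dop_grad_pI Dop_grad_qI.
have -> : \sum_(i < n) (
     (x 0 (pI i) * Dop (dxi (qI i) S) x xi
      + dxi (qI i) S x xi * (xi 0 (qI i) + xi 0 tI * x 0 (pI i)))
   - (x 0 (qI i) * Dop (dxi (pI i) S) x xi
      + dxi (pI i) S x xi * (- xi 0 (pI i) + xi 0 tI * x 0 (qI i))))
  = \sum_(i < n) (x 0 (pI i) * Dop (dxi (qI i) S) x xi - x 0 (qI i) * Dop (dxi (pI i) S) x xi)
    + \sum_(i < n) (xi 0 (qI i) * dxi (qI i) S x xi + xi 0 (pI i) * dxi (pI i) S x xi)
    + xi 0 tI * \sum_(i < n) (x 0 (pI i) * dxi (qI i) S x xi - x 0 (qI i) * dxi (pI i) S x xi).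
  by rewrite !mulr_sumr -!big_split; apply: eq_bigr => i _ /=; ring_atoms.
by rewrite (homsymb_euler_split x xi hS) /ialpha /ialpha_grad; ring_atoms.
Qed.

Lemma ialpha_Xw k S c x xi : homsymb k S ->
  ialpha (Xw c S) x xi = Xw (c - 1) (ialpha S) x xi - 2^-1 * (c + k%:R) * S x xi.
Proof.
move=> hS; rewrite (ialpha_XwE _ _ _ hS) /Xw (Dop_ialpha _ _ hS).
by move: (ialpha_grad _ x) (ialpha S x xi) => A iS; ring_atoms.
Qed.

Lemma Xw_zero c x xi : Xw c (fun _ _ : P => 0) x xi = 0.
Proof.
rewrite /Xw DopE (_ : (fun a => dx a (fun _ _ : P => 0) x xi) = fun a => 0 * 0); last first.
  by apply/funext => a; rewrite mulr0; apply: pdiff_val; apply: is_pderive_cst.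
by rewrite (Dop_gradZ 0 (fun _ => 0)) !mul0r mulr0 addr0.
Qed.

Lemma ialpha_homsymb0 S : homsymb 0 S -> ialpha S = fun _ _ => 0.
Proof.
move=> hS; apply/funext => x; apply/funext => xi.
have dxi0 j : dxi j S x xi = 0.
  case: hS => I [c [e [h ->]]]; rewrite dxi_symb_sum /= big1 // => i _; rewrite /dmonom.
  by have := expo_le_deg (e i) j; rewrite (h i).2 leqn0 => /eqP ->; rewrite !mul0r mulr0.
rewrite /ialpha; under eq_bigr => i _ do rewrite !dxi0.
rewrite dxi0 big1 => [|i _]; first by rewrite subrr mulr0.
by rewrite !mulr0 subrr.
Qed.

Lemma homsymb_Xop delta k S : homsymb k S -> homsymb k.+1 (Xop delta k S).
Proof. exact: homsymb_Xw. Qed.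

Lemma ialpha_Xop delta k S : homsymb k S ->
  ialpha (Xop delta k S) = fun x xi => Xop delta k.-1 (ialpha S) x xi
    - 2^-1 * (2 * (n.+1)%:R * delta + k%:R + k%:R) * S x xi.
Proof.
move=> hS; apply/funext => x; apply/funext => xi.
change (ialpha (Xw (2 * (n.+1)%:R * delta + k%:R) S) x xi = Xop delta k.-1 (ialpha S) x xi
  - 2^-1 * (2 * (n.+1)%:R * delta + k%:R + k%:R) * S x xi).
rewrite (ialpha_Xw _ _ _ hS); congr (_ - _).
case: k hS => [|k] hS.
  by rewrite (ialpha_homsymb0 hS) Xw_zero; symmetry; exact: Xw_zero.
change (Xw (2 * (n.+1)%:R * delta + k.+1%:R - 1) (ialpha S) x xi
  = Xw (2 * (n.+1)%:R * delta + k%:R) (ialpha S) x xi).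
by rewrite -[(k.+1)%:R]natr1 addrA addrK.
Qed.

Lemma ialphaBZ ka kb A B (lam : R) : homsymb ka A -> homsymb kb B ->
  ialpha (fun x xi => A x xi - lam * B x xi) = fun x xi => ialpha A x xi - lam * ialpha B x xi.
Proof.
move=> hA hB; apply/funext => x; apply/funext => xi.
rewrite !ialphaE -ialpha_gradBZ; congr ialpha_grad; apply/funext => j.
apply: pdiff_val; apply: is_pderiveB; first exact: homsymb_is_pderive_xi hA.
by apply: is_pderiveZ; apply: homsymb_is_pderive_xi hB.
Qed.

Lemma iter_ialphaBZ m ka kb A B (lam : R) : homsymb ka A -> homsymb kb B ->
  forall x xi, iter m (@ialpha R n) (fun x xi => A x xi - lam * B x xi) x xi
    = iter m (@ialpha R n) A x xi - lam * iter m (@ialpha R n) B x xi.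
Proof.
elim: m ka kb A B => [|m IH] ka kb A B hA hB x xi //.
by rewrite !iterSr (ialphaBZ _ hA hB); exact: IH (homsymb_ialpha hA) (homsymb_ialpha hB) x xi.
Qed.

Lemma iter_ialpha_Xop delta m k S : homsymb k S ->
  (forall x xi, iter m (@ialpha R n) S x xi = 0) ->
  forall x xi, iter m.+1 (@ialpha R n) (Xop delta k S) x xi = 0.
Proof.
elim: m k S => [|m IH] k S hS hker x xi.
  have -> : S = (fun _ _ => 0) by apply/funext => y; apply/funext => z; exact: hker.
  have -> : Xop delta k (fun _ _ : P => 0) = fun _ _ => 0.
    by apply/funext => y; apply/funext => z; exact: Xw_zero.
  by rewrite /= (ialpha_homsymb0 (homsymb0 R n 0)).
have hiS := homsymb_ialpha hS.
rewrite iterSr (ialpha_Xop _ hS) (iter_ialphaBZ _ _ (homsymb_Xop delta hiS) hS).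
rewrite (IH _ _ hiS) ?hker ?mulr0 ?subr0 // => y z.
by rewrite -iterSr; exact: hker.
Qed.

End Operators.

Unset Implicit Arguments.

Theorem proposition6p1 (R : realType) (n : nat) (delta : R) (k l : nat) :
  (1 <= n)%N -> (1 <= k)%N -> (1 <= l <= k.+1)%N ->
  (forall S : symb R n, Fkl k l S -> Fkl (k.-1) (l.-1) (ialpha S)) /\
  (forall S : symb R n, Fkl (k.-1) (l.-1) S -> Fkl k l (Xop delta (k.-1) S)).
Proof.
move=> _ hk /andP [hl _]; split => S [/Rk_homsymb hS hker]; split.
- exact/homsymb_Rk/homsymb_ialpha.
- case: l hl hker => // l _ hker x xi /=.
  by rewrite -iterSr; exact: hker.
- by apply: homsymb_Rk; have := homsymb_Xop delta hS; rewrite prednK.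
- by case: l hl hker => // l _; exact: iter_ialpha_Xop hS.
Qed.
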